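(* Let $F\subseteq\{1,\dots,d\}$ and $\beta=\hat\beta(F)$. Let $\beta'\in\mathbb{R}^d$ have support $F'$, and let $s$ be a positive integer with $|F\cup F'|\le s$. Let $i$ be an index with $|\nabla Q(\beta)_i|=\|\nabla Q(\beta)\|_\infty$. Then $$|F'-F|\big(Q(\beta)-\min_\eta Q(\beta+\eta e_i)\big)\ge\frac{\rho_-(s)}{\rho_+(1)}\big(Q(\beta)-Q(\beta')\big).$$
   Context: Let $Q:\mathbb{R}^d\to\mathbb{R}$ be convex and continuously differentiable. $e_j$ is the $j$-th standard basis vector, $\mathrm{supp}(\beta)=\{j:\beta_j\ne0\}$, $\|\beta\|_0=|\mathrm{supp}(\beta)|$, $A-B$ is set difference. For $F\subseteq\{1,\dots,d\}$, $\hat\beta(F)$ denotes a minimizer of $Q$ over $\{\beta:\mathrm{supp}(\beta)\subseteq F\}$ (assumed to exist). For a positive integer $s$, the restricted strong convexity constants $\rho_-(s),\rho_+(s)>0$ are constants such that for all $\beta,\beta'\in\mathbb{R}^d$ with $\|\beta'-\beta\|_0\le s$: $\frac{\rho_-(s)}{2}\|\beta'-\beta\|^2\le Q(\beta')-Q(\beta)-\langle\nabla Q(\beta),\beta'-\beta\rangle\le\frac{\rho_+(s)}{2}\|\beta'-\beta\|^2.$ *)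

From Stdlib Require Import Reals.
From mathcomp Require Import all_boot.
Set Implicit Arguments. Unset Strict Implicit. Unset Printing Implicit Defensive.

Open Scope R_scope.

Definition vec (d : nat) := 'I_d -> R.

Definition vadd d (u v : vec d) : vec d := fun j => u j + v j.
Definition vsub d (u v : vec d) : vec d := fun j => u j - v j.
Definition vscale d (a : R) (v : vec d) : vec d := fun j => a * v j.

Definition ebasis d (j : 'I_d) : vec d := fun k => if k == j then 1 else 0.

Definition dot d (u v : vec d) : R := \big[Rplus/0]_(j < d) (u j * v j).
Definition norm d (v : vec d) : R := sqrt (dot v v).
Definition linf_norm d (v : vec d) : R := \big[Rmax/0]_(j < d) Rabs (v j).

Definition nonzerob (x : R) : bool := if Req_EM_T x 0 then false else true.

Definition supp d (v : vec d) : {set 'I_d} := [set j | nonzerob (v j)].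
Definition l0 d (v : vec d) : nat := #|supp v|.

Definition convex_fun d (Q : vec d -> R) : Prop :=
  forall (x y : vec d) (t : R), 0 <= t <= 1 ->
    Q (vadd (vscale t x) (vscale (1 - t) y)) <= t * Q x + (1 - t) * Q y.

Definition is_C1_gradient d (Q : vec d -> R) (g : vec d -> vec d) : Prop :=
  (forall (b : vec d) (j : 'I_d),
      derivable_pt_lim (fun t => Q (vadd b (vscale t (ebasis j)))) 0 (g b j)) /\
  (forall (b : vec d) (j : 'I_d) (eps : R), 0 < eps ->
      exists delta, 0 < delta /\
        forall b' : vec d, norm (vsub b' b) < delta -> Rabs (g b' j - g b j) < eps).

Definition RSC d (Q : vec d -> R) (g : vec d -> vec d) (s : nat) (rm rp : R) : Prop :=
  0 < rm /\ 0 < rp /\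
  forall b b' : vec d, (l0 (vsub b' b) <= s)%N ->
    rm / 2 * (norm (vsub b' b))^2 <= Q b' - Q b - dot (g b) (vsub b' b) /\
    Q b' - Q b - dot (g b) (vsub b' b) <= rp / 2 * (norm (vsub b' b))^2.

Definition is_hat_beta d (Q : vec d -> R) (F : {set 'I_d}) (b : vec d) : Prop :=
  supp b \subset F /\ forall c : vec d, supp c \subset F -> Q b <= Q c.

From Pilot Require Import Defs.
From Stdlib Require Import Reals.
From mathcomp Require Import all_boot.
Open Scope R_scope.
From HB Require Import structures.
From Stdlib Require Import Lra Psatz FunctionalExtensionality.
Set Implicit Arguments. Unset Strict Implicit.

(* Write G = ||grad Q(beta)||_oo = |grad Q(beta)_i|.
   - Upper bound on the greedy step: restricted smoothness rho_+(1) along the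
     coordinate line beta + t e_i, at t = -grad Q(beta)_i / rho_+(1), shows that the
     line minimum lies at least G^2/(2 rho_+(1)) below Q(beta).  The line
     minimum exists because Q is continuous along lines (it is differentiable)
     and coercive along them (restricted strong convexity rho_-(1) > 0).
   - Lower bound on the gap to beta': the same smoothness argument on the
     coordinates j in F, together with optimality of beta = hat-beta(F), gives
     grad Q(beta)_j = 0 there.  Restricted strong convexity rho_-(s) applied to
     beta' - beta (support in F u F') and minimization of each summand
     z y + rho_-(s)/2 y^2 >= -z^2/(2 rho_-(s)) >= -G^2/(2 rho_-(s)) gives
     Q(beta) - Q(beta') <= |F' - F| G^2 / (2 rho_-(s)).
   Multiplying the second bound by rho_-(s)/rho_+(1) and using the first one
   yields the theorem. *)

(* Real addition as a commutative monoid law, so that the generic big-operator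
   lemmas (bigD1, big1, ...) apply to the sums of Defs. *)
HB.instance Definition _ := Monoid.isComLaw.Build R 0 Rplus
  (fun x y z => esym (Rplus_assoc x y z)) Rplus_comm Rplus_0_l.

Definition coord_move d (b : vec d) (j : 'I_d) (t : R) : vec d :=
  vadd b (vscale t (ebasis j)).

Lemma notin_supp d (v : vec d) j : j \notin supp v -> v j = 0.
Proof. by rewrite inE /nonzerob; case: Req_EM_T. Qed.

Lemma supp_sub d (v : vec d) (S : {set 'I_d}) :
  (forall k, k \notin S -> v k = 0) -> supp v \subset S.
Proof.
move=> vS; apply/subsetP => k; rewrite inE; apply: contraTT => /vS ->.
by rewrite /nonzerob; case: Req_EM_T.
Qed.

Lemma coord_step_off d (j k : 'I_d) t : k != j -> vscale t (ebasis j) k = 0.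
Proof. by move=> kj; rewrite /vscale /ebasis (negbTE kj) Rmult_0_r. Qed.

Lemma coord_step_on d (j : 'I_d) t : vscale t (ebasis j) j = t.
Proof. by rewrite /vscale /ebasis eqxx Rmult_1_r. Qed.

Lemma coord_move_sub d (b : vec d) j t : vsub (coord_move b j t) b = vscale t (ebasis j).
Proof. apply: functional_extensionality => k; rewrite /vsub /coord_move /vadd; ring. Qed.

Lemma coord_move_add d (b : vec d) j a t :
  coord_move (coord_move b j a) j t = coord_move b j (a + t).
Proof.
apply: functional_extensionality => k; rewrite /coord_move /vadd /vscale; ring.
Qed.

Lemma coord_move0 d (b : vec d) j : coord_move b j 0 = b.
Proof. apply: functional_extensionality => k; rewrite /coord_move /vadd /vscale; ring. Qed.

Lemma dot_single d (u v : vec d) i :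
  (forall k, k != i -> v k = 0) -> dot u v = u i * v i.
Proof.
move=> vi; rewrite /dot (bigD1 i) //= big1 ?Rplus_0_r // => k ki.
by rewrite vi // Rmult_0_r.
Qed.

Lemma norm_sq d (v : vec d) : norm v ^ 2 = dot v v.
Proof.
rewrite /norm pow2_sqrt //; apply: (big_ind (fun x => 0 <= x)) => *; nra.
Qed.

Lemma big_Rplus_lin (I : Type) (r : seq I) (F G : I -> R) x :
  \big[Rplus/0]_(k <- r) (F k + x * G k) =
  \big[Rplus/0]_(k <- r) F k + x * \big[Rplus/0]_(k <- r) G k.
Proof. by elim: r => [|a r IH]; rewrite ?big_nil ?big_cons ?IH; ring. Qed.

Lemma big_Rplus_le (I : Type) (r : seq I) (F G : I -> R) :
  (forall k, F k <= G k) ->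
  \big[Rplus/0]_(k <- r) F k <= \big[Rplus/0]_(k <- r) G k.
Proof. by move=> FG; apply: (big_ind2 (fun x y => x <= y)) => *; [lra|lra|apply: FG]. Qed.

Lemma sum_indicator d (S : {set 'I_d}) c :
  \big[Rplus/0]_(k < d) (if k \in S then c else 0) = INR #|S| * c.
Proof.
rewrite -big_mkcond /= big_const.
by elim: #|S| => [|n IH]; [rewrite /=|rewrite iterS IH S_INR]; ring.
Qed.

Lemma linf_ge d (v : vec d) j : Rabs (v j) <= linf_norm v.
Proof.
rewrite /linf_norm; elim: (index_enum _) (mem_index_enum j) => [//|a r IH].
rewrite in_cons big_cons => /orP [/eqP <-|/IH jr]; first exact: Rmax_l.
exact: Rle_trans jr (Rmax_r _ _).
Qed.

Lemma quad_at_min p x : 0 < p -> x * (- x / p) + p / 2 * (- x / p) ^ 2 = - (x ^ 2 / (2 * p)).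
Proof. by move=> p0; field; lra. Qed.

Lemma quad_ge_min m z y : 0 < m -> - (z ^ 2 / (2 * m)) <= z * y + m / 2 * (y * y).
Proof.
move=> m0; have -> : z * y + m / 2 * (y * y) = (m * y + z) ^ 2 / (2 * m) - z ^ 2 / (2 * m).
  by field; lra.
suff : 0 <= (m * y + z) ^ 2 / (2 * m) by lra.
apply: Rmult_le_pos; [exact: pow2_ge_0 | left; apply: Rinv_0_lt_compat; lra].
Qed.

Lemma sq_le_of_abs_le z G : Rabs z <= G -> z ^ 2 <= G ^ 2.
Proof. by move=> zG; rewrite -(pow2_abs z); have := Rabs_pos z; nra. Qed.

Section CoordinateLines.
Variables (d : nat) (Q : vec d -> R) (g : vec d -> vec d).

Lemma rsc_coord s rm rp b j t : RSC Q g s rm rp -> (0 < s)%N ->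
  rm / 2 * t ^ 2 <= Q (coord_move b j t) - Q b - g b j * t <= rp / 2 * t ^ 2.
Proof.
case=> _ [_ rsc] s0.
have l0_step : (l0 (vsub (coord_move b j t) b) <= s)%N.
  rewrite coord_move_sub /l0; apply: leq_trans s0; rewrite -(cards1 j).
  by apply/subset_leq_card/supp_sub => k; rewrite inE => /coord_step_off.
move: (rsc b _ l0_step); rewrite coord_move_sub norm_sq.
have step_off k : k != j -> vscale t (ebasis j) k = 0 by apply: coord_step_off.
rewrite !(dot_single _ step_off) coord_step_on; lra.
Qed.

Lemma coord_descent rm rp b j : RSC Q g 1 rm rp ->
  Q (coord_move b j (- g b j / rp)) <= Q b - (g b j) ^ 2 / (2 * rp).
Proof.
move=> rsc; have rp0 : 0 < rp by case: rsc => _ [].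
have [_ up] := rsc_coord b j (- g b j / rp) rsc isT.
have := quad_at_min (g b j) rp0; lra.
Qed.

Lemma hat_beta_grad_zero rm rp F b j : RSC Q g 1 rm rp -> is_hat_beta Q F b ->
  j \in F -> g b j = 0.
Proof.
move=> rsc [bF bmin] jF; have rp0 : 0 < rp by case: rsc => _ [].
have moveF : supp (coord_move b j (- g b j / rp)) \subset F.
  apply: supp_sub => k kF; have kj : k != j by apply: contraNneq kF => ->.
  rewrite /coord_move /vadd coord_step_off // notin_supp; first lra.
  by apply: contra kF; apply: (subsetP bF).
have gap : g b j ^ 2 / (2 * rp) <= 0.
  by have := bmin _ moveF; have := coord_descent b j rsc; lra.
have inv0 : 0 < / (2 * rp) by apply: Rinv_0_lt_compat; lra.
rewrite /Rdiv /= Rmult_1_r in gap; apply: Rsqr_eq_0; rewrite /Rsqr; nra.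
Qed.

Lemma coord_coercive rm rp b j t : RSC Q g 1 rm rp ->
  2 * Rabs (g b j) / rm <= Rabs t -> Q b <= Q (coord_move b j t).
Proof.
move=> rsc far; have rm0 : 0 < rm by case: rsc.
have [low _] := rsc_coord b j t rsc isT.
have lin : - (Rabs (g b j) * Rabs t) <= g b j * t.
  by rewrite -Rabs_mult; have := Rle_abs (- (g b j * t)); rewrite Rabs_Ropp; lra.
have sq : t ^ 2 = Rabs t * Rabs t by rewrite -pow2_abs /=; ring.
have far' : 2 * Rabs (g b j) <= rm * Rabs t.
  have -> : 2 * Rabs (g b j) = rm * (2 * Rabs (g b j) / rm) by field; lra.
  by apply: Rmult_le_compat_l => //; lra.
have := Rabs_pos t; nra.
Qed.

Lemma coord_line_continuous b j c : is_C1_gradient Q g ->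
  continuity_pt (fun t => Q (coord_move b j t)) c.
Proof.
case=> [partial _]; apply: derivable_continuous_pt.
exists (g (coord_move b j c) j) => eps eps0.
have [del hdel] := partial (coord_move b j c) j eps eps0.
exists del => h h0 hdel'; move: (hdel h h0 hdel').
have shift u : vadd (coord_move b j c) (vscale u (ebasis j)) = coord_move b j (c + u).
  exact: coord_move_add.
by rewrite !shift Rplus_0_l Rplus_0_r.
Qed.

Lemma coord_line_min rm rp b j : is_C1_gradient Q g -> RSC Q g 1 rm rp ->
  exists t0, forall t, Q (coord_move b j t0) <= Q (coord_move b j t).
Proof.
move=> C1 rsc; have rm0 : 0 < rm by case: rsc.
set r := 2 * Rabs (g b j) / rm.
have r0 : 0 <= r.
  by apply: Rmult_le_pos; [have := Rabs_pos (g b j); lra | left; apply: Rinv_0_lt_compat].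
have [t0 [t0min _]] := continuity_ab_min (fun t => Q (coord_move b j t)) (- r) r
  ltac:(lra) (fun c _ => coord_line_continuous b j c C1).
exists t0 => t; case: (Rle_lt_dec (Rabs t) r) => tr.
  by apply: t0min; split; [have := Rle_abs (- t); rewrite Rabs_Ropp | have := Rle_abs t]; lra.
apply: Rle_trans (t0min 0 ltac:(lra)) _; rewrite coord_move0.
by apply: (coord_coercive rsc); rewrite -/r; lra.
Qed.

Lemma coord_line_min_progress rm rp b j t0 : RSC Q g 1 rm rp ->
  (forall t, Q (coord_move b j t0) <= Q (coord_move b j t)) ->
  (g b j) ^ 2 / (2 * rp) <= Q b - Q (coord_move b j t0).
Proof. by move=> rsc t0min; have := t0min (- g b j / rp); have := coord_descent b j rsc; lra. Qed.

(* Restricted strong convexity at level s bounds how much any b' with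
   |F u supp b'| <= s can improve on b = hat-beta(F): each coordinate of
   supp b' - F contributes at most ||grad Q(b)||_oo^2 / (2 rho_-(s)), and the
   coordinates in F contribute nothing since the gradient vanishes there. *)
Lemma hat_beta_gap rm rp s rms rps F b b' :
  RSC Q g 1 rm rp -> RSC Q g s rms rps -> is_hat_beta Q F b ->
  (#|F :|: supp b'| <= s)%N ->
  Q b - Q b' <= INR #|supp b' :\: F| * (linf_norm (g b) ^ 2 / (2 * rms)).
Proof.
move=> rsc1 rscs hb Fs; have rms0 : 0 < rms by case: rscs.
have bF k : k \notin F -> b k = 0.
  by move=> kF; apply: notin_supp; apply: contra kF; apply: (subsetP hb.1).
set u := vsub b' b.
have l0u : (l0 u <= s)%N.
  apply/(leq_trans _ Fs)/subset_leq_card/supp_sub => k.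
  by rewrite in_setU negb_or => /andP [kF kb']; rewrite /u /vsub (notin_supp kb') bF //; ring.
have [low _] := (proj2 (proj2 rscs)) b b' l0u; rewrite -/u norm_sq in low.
have summand k : (if k \in supp b' :\: F then - (linf_norm (g b) ^ 2 / (2 * rms)) else 0)
    <= g b k * u k + rms / 2 * (u k * u k).
  rewrite in_setD; case: (boolP (k \in F)) => kF /=.
    by rewrite (hat_beta_grad_zero rsc1 hb kF); nra.
  case: (boolP (k \in supp b')) => kb' /=.
    apply: Rle_trans (quad_ge_min _ _ rms0); apply: Ropp_le_contravar.
    apply: Rmult_le_compat_r; first by left; apply: Rinv_0_lt_compat; lra.
    exact/sq_le_of_abs_le/linf_ge.
  by rewrite /u /vsub (notin_supp kb') bF //; lra.
have := big_Rplus_le (index_enum 'I_d) summand.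
rewrite big_Rplus_lin sum_indicator -/(dot _ _) -/(dot u u); lra.
Qed.

End CoordinateLines.

Theorem mainTheorem14 (d : nat) (Q : vec d -> R) (g : vec d -> vec d)
  (rho_m rho_p : nat -> R)
  (HQconv : convex_fun Q) (HQC1 : is_C1_gradient Q g)
  (F : {set 'I_d}) (beta : vec d) (Hbeta : is_hat_beta Q F beta)
  (beta' : vec d) (s : nat) (Hs : (0 < s)%N)
  (HFs : (#|F :|: supp beta'| <= s)%N)
  (HRs : RSC Q g s (rho_m s) (rho_p s))
  (HR1 : RSC Q g 1 (rho_m 1%N) (rho_p 1%N))
  (i : 'I_d) (Hi : Rabs (g beta i) = linf_norm (g beta)) :
  exists eta0 : R,
    (forall eta : R, Q (vadd beta (vscale eta0 (ebasis i)))
                     <= Q (vadd beta (vscale eta (ebasis i)))) /\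
    INR #|supp beta' :\: F| * (Q beta - Q (vadd beta (vscale eta0 (ebasis i))))
      >= rho_m s / rho_p 1%N * (Q beta - Q beta').
Proof.
have [eta0 eta0min] := coord_line_min beta i HQC1 HR1.
exists eta0; split => //.
set m := rho_m s; set p := rho_p 1%N; set G2 := linf_norm (g beta) ^ 2.
have m0 : 0 < m by case: HRs.
have p0 : 0 < p by case: HR1 => _ [].
have progress : G2 / (2 * p) <= Q beta - Q (coord_move beta i eta0).
  by rewrite /G2 -Hi pow2_abs; apply: coord_line_min_progress HR1 eta0min.
have gap : Q beta - Q beta' <= INR #|supp beta' :\: F| * (G2 / (2 * m)).
  exact: hat_beta_gap HR1 HRs Hbeta HFs.
have scale : m / p * (G2 / (2 * m)) = G2 / (2 * p) by field; lra.
have mp0 : 0 <= m / p by left; apply: Rdiv_lt_0_compat.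
have card0 := pos_INR #|supp beta' :\: F|.
apply: Rle_ge; apply: Rle_trans (Rmult_le_compat_l _ _ _ mp0 gap) _.
rewrite -Rmult_assoc (Rmult_comm (m / p)) Rmult_assoc scale.
exact: Rmult_le_compat_l.
Qed.
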